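(* For each integer $k\ge 2$, a $k$-regular friendship digraph exists if and only if there exists a $(k^2-k+1,k,1)$-SBIBD.
   Context: All digraphs are finite and have neither loops nor parallel arcs (a pair of opposite arcs $(u,v)$ and $(v,u)$ is allowed). A friendship digraph is a nontrivial digraph (at least two vertices) in which any two distinct vertices have exactly one common out-neighbor. A $k$-regular digraph is one in which every vertex has outdegree $k$ and indegree $k$. A $(v,k,\lambda)$-SBIBD (symmetric balanced incomplete block design) is a set $V$ of $v$ varieties (points) together with a collection of $v$ blocks, each a $k$-element subset of $V$, such that each variety lies in exactly $k$ blocks and each pair of distinct varieties lies in exactly $\lambda$ blocks. *)

From mathcomp Require Import all_boot.
Set Implicit Arguments. Unset Strict Implicit. Unset Printing Implicit Defensive.

(* A finite digraph on vertex set T is an arc relation adj : rel T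
   (adj u v = arc u -> v). Using a relation excludes parallel arcs;
   loops are excluded by irreflexivity. Opposite arcs are allowed. *)
Definition loopless (T : finType) (adj : rel T) : Prop :=
  forall u : T, ~~ adj u u.

Definition out_nbhd (T : finType) (adj : rel T) (u : T) : {set T} :=
  [set w | adj u w].
Definition in_nbhd (T : finType) (adj : rel T) (u : T) : {set T} :=
  [set w | adj w u].

Definition friendship_digraph (T : finType) (adj : rel T) : Prop :=
  loopless adj /\ 2 <= #|T| /\
  forall u v : T, u != v -> #|out_nbhd adj u :&: out_nbhd adj v| = 1.

Definition k_regular (T : finType) (adj : rel T) (k : nat) : Prop :=
  forall u : T, #|out_nbhd adj u| = k /\ #|in_nbhd adj u| = k.

(* (v,k,lambda)-SBIBD: varieties V, a collection of v blocks indexed by I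
   (repetitions allowed), each block a k-subset, each variety in k blocks,
   each pair of distinct varieties in lambda blocks. *)
Definition is_SBIBD (V I : finType) (B : I -> {set V}) (v k lam : nat) : Prop :=
  [/\ #|V| = v, #|I| = v,
      (forall i : I, #|B i| = k),
      (forall x : V, #|[set i | x \in B i]| = k) &
      (forall x y : V, x != y -> #|[set i | (x \in B i) && (y \in B i)]| = lam)].

From mathcomp Require Import all_boot zify.
Set Implicit Arguments. Unset Strict Implicit. Unset Printing Implicit Defensive.

(* The in-neighbourhoods of a k-regular friendship digraph on n vertices form a
   symmetric design with blocks of size k in which two points share exactly one
   block, and counting around a fixed vertex gives n - 1 = k (k - 1).
   Conversely, in a (k^2 - k + 1, k, 1)-SBIBD the non-incidence relation between
   points and blocks is (k - 1)^2-regular, so Hall's marriage theorem yields a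
   bijection f from points to blocks with x outside B (f x); the arcs w -> u for
   w in B (f u) then form a loopless k-regular friendship digraph. *)

Lemma double_count (A B : finType) (R : A -> B -> bool) :
  \sum_a #|[set b | R a b]| = \sum_b #|[set a | R a b]|.
Proof.
have card_sum (C : finType) (P : pred C) : #|[set c | P c]| = \sum_c (P c : nat).
  by rewrite -sum1dep_card big_mkcond; apply: eq_bigr => c _; case: (P c).
under eq_bigr do rewrite card_sum.
by rewrite exchange_big; under [RHS]eq_bigr do rewrite card_sum.
Qed.

Section HallMarriage.

Variables X Y : finType.
Implicit Types (E : X -> Y -> bool) (A S T : {set X}) (N : {set Y}).

Definition nbhd E S : {set Y} := [set y | [exists x in S, E x y]].

Definition hall_condition E A := forall S, S \subset A -> #|S| <= #|nbhd E S|.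

Definition matches E A (f : X -> Y) :=
  {in A &, injective f} /\ {in A, forall x, E x (f x)}.

Definition avoid E N x y := E x y && (y \notin N).

Lemma mem_nbhd E S x y : x \in S -> E x y -> y \in nbhd E S.
Proof. by move=> xS Exy; rewrite inE; apply/existsP; exists x; rewrite xS. Qed.

Lemma nbhdU E S T : nbhd E (S :|: T) = nbhd E S :|: nbhd E T.
Proof.
apply/setP => y; rewrite !inE; apply/existsP/orP => [[x /andP [/setUP [xS|xT] Exy]]|].
- by left; apply/existsP; exists x; rewrite xS.
- by right; apply/existsP; exists x; rewrite xT.
by case=> /existsP [x /andP [xST Exy]]; exists x; rewrite inE xST ?orbT.
Qed.

Lemma nbhd_avoid E N S : nbhd (avoid E N) S = nbhd E S :\: N.
Proof.
apply/setP => y; rewrite !inE; apply/existsP/andP.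
  by case=> x /and3P [xS Exy yN]; split; last by apply/existsP; exists x; rewrite xS.
by case=> yN /existsP [x /andP [xS Exy]]; exists x; rewrite /avoid xS Exy.
Qed.

Lemma matches_glue E A S N f g :
  matches E S f -> {in S, forall x, f x \in N} -> matches (avoid E N) (A :\: S) g ->
  matches E A (fun x => if x \in S then f x else g x).
Proof.
move=> [f_inj f_E] f_N [g_inj g_E].
have ASP x : x \in A -> x \notin S -> x \in A :\: S by move=> xA xS; rewrite inE xS.
have g_N x : x \in A -> x \notin S -> g x \notin N.
  by move=> xA xS; case/andP: (g_E x (ASP x xA xS)).
split=> [x y xA yA /=|x xA /=].
- case: ifPn => xS; case: ifPn => yS.
  + exact: f_inj.
  + by move=> fg; have := g_N y yA yS; rewrite -fg f_N.
  + by move=> gf; have := g_N x xA xS; rewrite gf f_N.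
  + by apply: g_inj; apply: ASP.
- case: ifPn => xS; first exact: f_E.
  by case/andP: (g_E x (ASP x xA xS)).
Qed.

Lemma hall_condition_tight E A S :
  hall_condition E A -> S \subset A -> #|nbhd E S| <= #|S| ->
  hall_condition (avoid E (nbhd E S)) (A :\: S).
Proof.
move=> hall SA tight T TAS.
have TA : T \subset A := subset_trans TAS (subsetDl A S).
have TS0 : T :&: S = set0.
  apply/setP => x; rewrite !inE; case xT: (x \in T) => //=.
  by have := subsetP TAS x xT; rewrite inE => /andP [/negbTE].
have := hall (T :|: S); rewrite subUset TA SA nbhdU => /(_ isT).
rewrite nbhd_avoid cardsD cardsU TS0 cards0 cardsU.
have := subset_leq_card (subsetIl (nbhd E T) (nbhd E S)).
lia.
Qed.

Lemma hall_condition_loose E A a b :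
  (forall T, T != set0 -> T \proper A -> #|T| < #|nbhd E T|) ->
  a \in A -> E a b -> hall_condition (avoid E [set b]) (A :\ a).
Proof.
move=> loose aA Eab T TAa.
have [->|[t tT]] := set_0Vmem T; first by rewrite cards0.
have TA : T \proper A.
  apply/properP; split; first exact: subset_trans TAa (subsetDl A _).
  by exists a => //; apply/negP => /(subsetP TAa); rewrite !inE eqxx.
have T0 : T != set0 by apply/set0Pn; exists t.
have := loose T T0 TA.
rewrite nbhd_avoid (cardsD1 b (nbhd E T)); lia.
Qed.

Theorem hall_marriage E A (y0 : Y) : hall_condition E A -> exists f, matches E A f.
Proof.
suff: forall n E A, #|A| < n -> hall_condition E A -> exists f, matches E A f.
  by move/(_ _ E A (ltnSn _)).
elim=> // n IH {}E {}A leAn hall.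
(* Halmos-Vaughan: if some nonempty proper S is tight, match S inside its
   neighbourhood and A :\: S outside it; otherwise match any a to any neighbour b
   and A :\ a avoiding b, which keeps the Hall condition. *)
have [->|[a aA]] := set_0Vmem A.
  by exists (fun=> y0); split=> x; rewrite inE.
case: (pickP [pred S : {set X} | [&& S != set0, S \proper A & #|nbhd E S| <= #|S|]]).
- move=> S /and3P [S0 SA tight]; have SsubA := proper_sub SA.
  have [f fS] : exists f, matches E S f.
    apply: (IH E S (leq_trans (proper_card SA) leAn)).
    by move=> T TS; apply: hall (subset_trans TS SsubA).
  have [g gAS] : exists g, matches (avoid E (nbhd E S)) (A :\: S) g.
    apply: (IH _ _ _ (hall_condition_tight hall SsubA tight)).
    move: S0 (proper_card SA) leAn; rewrite cardsDS // -card_gt0; lia.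
  have fN x : x \in S -> f x \in nbhd E S by move=> xS; apply: mem_nbhd xS (fS.2 x xS).
  by exists (fun x => if x \in S then f x else g x); apply: matches_glue fS fN gAS.
- move=> no_tight.
  have loose T : T != set0 -> T \proper A -> #|T| < #|nbhd E T|.
    by move=> T0 TA; rewrite ltnNge; apply/negP => le; have := no_tight T; rewrite /= T0 TA le.
  have [b Eab] : exists b, E a b.
    have := hall [set a]; rewrite sub1set aA cards1 card_gt0 => /(_ isT) /set0Pn [b].
    by rewrite inE => /existsP [x /andP [/set1P -> Eab]]; exists b.
  have [g gAa] : exists g, matches (avoid E [set b]) (A :\ a) g.
    apply: (IH _ _ _ (hall_condition_loose loose aA Eab)).
    by move: leAn; rewrite (cardsD1 a A) aA.
  exists (fun x => if x \in [set a] then b else g x); apply: matches_glue gAa.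
  + by split=> [x y /set1P -> /set1P ->|x /set1P ->].
  + by move=> x _; rewrite inE.
Qed.

End HallMarriage.

Lemma regular_hall_condition (X Y : finType) (E : X -> Y -> bool) (A : {set X}) d :
  0 < d -> (forall x, d <= #|[set y | E x y]|) -> (forall y, #|[set x | E x y]| <= d) ->
  hall_condition E A.
Proof.
move=> d_gt0 degX degY S _; rewrite -(leq_pmul2r d_gt0).
have lower : #|S| * d <= \sum_x #|[set y | (x \in S) && E x y]|.
  rewrite -sum_nat_const big_mkcond /=; apply: leq_sum => x _.
  case: ifP => xS //; apply: leq_trans (degX x) (eq_leq _).
  by apply: eq_card => y; rewrite !inE.
have upper : \sum_y #|[set x | (x \in S) && E x y]| <= #|nbhd E S| * d.
  rewrite -sum_nat_const [X in _ <= X]big_mkcond /=; apply: leq_sum => y _.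
  case: ifPn => yN.
  - apply: leq_trans (degY y); apply: subset_leq_card.
    by apply/subsetP => x; rewrite !inE => /andP [].
  - rewrite leqn0 cards_eq0; apply/eqP/setP => x; rewrite !inE.
    by apply/negbTE/andP => -[xS Exy]; rewrite (mem_nbhd xS Exy) in yN.
by apply: leq_trans lower _; rewrite double_count.
Qed.

Lemma regular_bipartite_matching (X Y : finType) (E : X -> Y -> bool) (y0 : Y) d :
  0 < d -> (forall x, d <= #|[set y | E x y]|) -> (forall y, #|[set x | E x y]| <= d) ->
  exists f : X -> Y, injective f /\ forall x, E x (f x).
Proof.
move=> d_gt0 degX degY.
have [f [f_inj f_E]] :=
  hall_marriage (A := [set: X]) y0 (regular_hall_condition d_gt0 degX degY).
by exists f; split=> [x y|x]; [apply: f_inj | apply: f_E]; rewrite inE.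
Qed.

Lemma card_preim_bij (A B : finType) (f : A -> B) (P : pred B) :
  bijective f -> #|[set a | P (f a)]| = #|[set b | P b]|.
Proof.
move=> f_bij; rewrite -(on_card_preimset (onW_bij [set b | P b] f_bij)).
by apply: eq_card => a; rewrite !inE.
Qed.

Lemma friendship_order (T : finType) (adj : rel T) k :
  friendship_digraph adj -> k_regular adj k -> #|T| = k ^ 2 - k + 1.
Proof.
move=> [_ [T_ge2 common]] reg.
have /card_gt0P [x _] : 0 < #|T| by lia.
(* Each y other than x has exactly one out-neighbour u in common with x, and each
   out-neighbour u of x has k - 1 in-neighbours other than x. *)
pose R y u := [&& y != x, adj x u & adj y u].
have pairs : \sum_y #|[set u | R y u]| = #|T|.-1.
  rewrite -(cardsC1 x) -sum1_card [RHS]big_mkcond /=; apply: eq_bigr => y _.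
  rewrite in_setC1 /R; case: eqP => [_|/eqP yx] /=.
  - by apply/eqP; rewrite cards_eq0; apply/eqP/setP => u; rewrite !inE.
  - have xy : x != y by rewrite eq_sym.
    by rewrite -(common x y xy); apply: eq_card => u; rewrite !inE.
have arcs : \sum_u #|[set y | R y u]| = k * (k - 1).
  have [outk _] := reg x; rewrite -{1}outk -sum_nat_const [RHS]big_mkcond /=.
  apply: eq_bigr => u _.
  rewrite inE /R; case: (boolP (adj x u)) => xu /=.
  - have [_ <-] := reg u; rewrite (cardsD1 x (in_nbhd adj u)) inE xu add1n subn1 /=.
    by apply: eq_card => y; rewrite !inE.
  - by apply/eqP; rewrite cards_eq0; apply/eqP/setP => y; rewrite !inE andbF.
have := double_count R; rewrite pairs arcs; nia.
Qed.

Lemma in_nbhd_SBIBD (T : finType) (adj : rel T) k :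
  friendship_digraph adj -> k_regular adj k -> is_SBIBD (in_nbhd adj) (k ^ 2 - k + 1) k 1.
Proof.
move=> fr reg; have order := friendship_order fr reg; have [_ [_ common]] := fr.
split=> // [u | x | x y xy]; first by have [_ ->] := reg u.
- by have [<- _] := reg x; apply: eq_card => u; rewrite !inE.
- by rewrite -(common x y xy); apply: eq_card => u; rewrite !inE.
Qed.

Lemma SBIBD_avoiding_bijection (V I : finType) (B : I -> {set V}) v k lam :
  is_SBIBD B v k lam -> k < v -> exists f : V -> I, bijective f /\ forall x, x \notin B (f x).
Proof.
move=> [V_card I_card block_size replication _] k_lt_v.
have /card_gt0P [i0 _] : 0 < #|I| by rewrite I_card; lia.
have [f [f_inj f_avoid]] : exists f : V -> I, injective f /\ forall x, x \notin B (f x).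
  apply: (@regular_bipartite_matching _ _ (fun x i => x \notin B i) i0 (v - k)).
  - by rewrite subn_gt0.
  - move=> x; rewrite -I_card -(replication x) -(cardsC [set i | x \in B i]) addKn.
    by apply/eq_leq/eq_card => i; rewrite !inE.
  - move=> i; rewrite -V_card -(block_size i) -(cardsC (B i)) addKn.
    by apply/eq_leq/eq_card => x; rewrite !inE.
by exists f; split=> //; apply: inj_card_bij f_inj _; rewrite V_card I_card.
Qed.

Definition design_digraph (V I : finType) (B : I -> {set V}) (f : V -> I) : rel V :=
  [rel w u | w \in B (f u)].

Lemma design_digraph_regular (V I : finType) (B : I -> {set V}) (f : V -> I) v k lam :
  bijective f -> is_SBIBD B v k lam -> k_regular (design_digraph B f) k.
Proof.
move=> f_bij [_ _ block_size replication _] u; split.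
- rewrite -(replication u) -(card_preim_bij (fun i => u \in B i) f_bij).
  by apply: eq_card => w; rewrite !inE.
- by rewrite -(block_size (f u)); apply: eq_card => w; rewrite !inE.
Qed.

Lemma design_digraph_friendship (V I : finType) (B : I -> {set V}) (f : V -> I) v k :
  bijective f -> (forall x, x \notin B (f x)) -> 2 <= v -> is_SBIBD B v k 1 ->
  friendship_digraph (design_digraph B f).
Proof.
move=> f_bij f_avoid v_ge2 [V_card _ _ _ pair]; split; first exact: f_avoid.
split=> [|x y xy]; first by rewrite V_card.
rewrite -(pair x y xy) -(card_preim_bij (fun i => (x \in B i) && (y \in B i)) f_bij).
by apply: eq_card => u; rewrite !inE.
Qed.

Theorem theorem1p2 (k : nat) (hk : 2 <= k) :
  (exists (T : finType) (adj : rel T), friendship_digraph adj /\ k_regular adj k)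
  <->
  (exists (V I : finType) (B : I -> {set V}), is_SBIBD B (k ^ 2 - k + 1) k 1).
Proof.
have [k_lt_v v_ge2] : k < k ^ 2 - k + 1 /\ 2 <= k ^ 2 - k + 1 by split; nia.
split=> [[T [adj [fr reg]]] | [V [I [B design]]]].
- by exists T, T, (in_nbhd adj); apply: in_nbhd_SBIBD.
- have [f [f_bij f_avoid]] := SBIBD_avoiding_bijection design k_lt_v.
  exists V, (design_digraph B f); split.
  + exact: design_digraph_friendship f_bij f_avoid v_ge2 design.
  + exact: design_digraph_regular f_bij design.
Qed.
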